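(* Let $\mathcal P\subset\mathbb R^n$ be an $n$-dimensional convex polytope and consider $\dot x=Ax+a+Bu$, $x\in\mathcal P$, with $\operatorname{rank}(B)=n-1$, $(A,B)$ controllable and $\operatorname{int}\mathcal P\cap\mathcal O=\emptyset$. Let $y\ne z$ be points of $\mathcal P$ and let $l$ be the line segment joining them. If $z,y\notin\mathcal O$ and $\beta^Ty<\beta^Tz$, then $z\xrightarrow{l}y$.
   Context: $\mathcal B=\operatorname{Im}(B)$, $\mathcal O=\{x:Ax+a\in\mathcal B\}$; $\beta$ is the unit normal to $\mathcal B$ with $\beta^T(Ax+a)\le0$ for all $x\in\mathcal P$. $z\xrightarrow{l}y$ means there exist a piecewise continuous control $u$ and $T\ge0$ such that the solution $\phi^u_t(z)$ satisfies $\phi^u_T(z)=y$ and $\phi^u_t(z)\in l$ for all $t\in[0,T]$. *)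

From HB Require Import structures.
From mathcomp Require Import all_boot all_order all_algebra.
From mathcomp Require Import all_classical all_reals all_analysis.
Set Implicit Arguments. Unset Strict Implicit. Unset Printing Implicit Defensive.
Import Order.TTheory GRing.Theory Num.Theory.
Import numFieldNormedType.Exports.
Local Open Scope classical_set_scope.
Local Open Scope ring_scope.

Section Defs.
Variable R : realType.

Definition conv_hull (n : nat) (V : seq 'cV[R]_n) : set 'cV[R]_n :=
  [set x | exists lam : 'I_(size V) -> R,
     (forall i, 0 <= lam i) /\ \sum_(i < size V) lam i = 1 /\
     x = \sum_(i < size V) lam i *: V`_i].

Definition is_polytope (n : nat) (P : set 'cV[R]_n) : Prop :=
  exists V : seq 'cV[R]_n, P = conv_hull V.

(* x is an interior point of P (boxes generate the Euclidean topology) *)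
Definition interior_pt (n : nat) (P : set 'cV[R]_n) (x : 'cV[R]_n) : Prop :=
  exists eps : R, 0 < eps /\
    forall w : 'cV[R]_n, (forall i, `|w i 0 - x i 0| < eps) -> P w.

(* P is n-dimensional: it has nonempty interior in R^n *)
Definition full_dim (n : nat) (P : set 'cV[R]_n) : Prop :=
  exists x, interior_pt P x.

Definition controllable (n m : nat) (A : 'M[R]_n) (B : 'M[R]_(n, m)) : Prop :=
  \rank (\mxrow_(k < n) (A ^+ k *m B)) = n.

Definition imB (n m : nat) (B : 'M[R]_(n, m)) : set 'cV[R]_n :=
  [set v | exists w : 'cV[R]_m, v = B *m w].

Definition Oset (n m : nat) (A : 'M[R]_n) (a : 'cV[R]_n) (B : 'M[R]_(n, m))
  : set 'cV[R]_n := [set x | imB B (A *m x + a)].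

Definition segment (n : nat) (z y : 'cV[R]_n) : set 'cV[R]_n :=
  [set x | exists lam : R, 0 <= lam <= 1 /\ x = (1 - lam) *: z + lam *: y].

Definition dotv (n : nat) (u v : 'cV[R]_n) : R := (u^T *m v) 0 0.

(* s is a partition 0 = t_0 < t_1 < ... < t_k = T of [0, T] (t_1..t_k listed) *)
Definition partition_of (T : R) (s : seq R) : Prop :=
  path (fun p q : R => p < q) 0 s /\ last 0 s = T.

(* u is piecewise continuous on [0,T]: on each open piece (t_k, t_{k+1}) it
   coincides with a function continuous on the closed piece [t_k, t_{k+1}]
   (i.e. u is continuous there with finite one-sided limits at the ends). *)
Definition piecewise_continuous (m : nat) (T : R) (u : R -> 'cV[R]_m) : Prop :=
  exists s : seq R, partition_of T s /\
    forall k : nat, (k < size s)%N ->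
      exists g : R -> 'cV[R]_m,
        (forall j, {within `[nth 0 (0 :: s) k, nth 0 s k],
                     continuous (fun t => g t j 0)}) /\
        (forall t, nth 0 (0 :: s) k < t < nth 0 s k -> u t = g t).

(* z -l-> y : there exist a piecewise continuous control u and T >= 0 such
   that the (Caratheodory) solution x = phi^u(z) of x' = A x + a + B u,
   x(0) = z, satisfies x(T) = y and x(t) in l for all t in [0,T].
   The solution is continuous on [0,T] and satisfies the ODE at every
   t in (0,T) outside a finite set (the discontinuities of u). *)
Definition reach_within (n m : nat) (A : 'M[R]_n) (a : 'cV[R]_n)
  (B : 'M[R]_(n, m)) (l : set 'cV[R]_n) (z y : 'cV[R]_n) : Prop :=
  exists (u : R -> 'cV[R]_m) (T : R), 0 <= T /\ piecewise_continuous T u /\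
  exists (x : R -> 'cV[R]_n) (F : seq R),
    x 0 = z /\ x T = y /\
    (forall t, 0 <= t <= T -> l (x t)) /\
    (forall j, {within `[0, T], continuous (fun t => x t j 0)}) /\
    (forall t, 0 < t < T -> t \notin F ->
       forall j, is_derive t 1 (fun s => x s j 0) ((A *m x t + a + B *m u t) j 0)).

End Defs.

From HB Require Import structures.
From mathcomp Require Import all_boot all_order all_algebra.
From mathcomp Require Import all_classical all_reals all_analysis.
From mathcomp Require Import ring lra.
Import Order.TTheory GRing.Theory Num.Theory.
Local Open Scope classical_set_scope.
Local Open Scope ring_scope.

(* Since beta is orthogonal to Im B, which is the whole hyperplane orthogonal
   to beta, the control B u can produce any velocity v with
   beta^T v = beta^T (A x + a).  We move along l, x = z + s d with d = y - z,
   at velocity (c0 + c1 s) d; matching the beta-components forces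
   c0 + c1 s = beta^T (A x + a) / beta^T d, which is affine in s and positive
   at both ends of l because the drift beta^T (A x + a) is negative off O.
   The scalar ODE s' = c0 + c1 s then carries s from 0 to 1 in finite time. *)

Section DotProduct.
Variables (R : realType) (n : nat).
Implicit Types b u v : 'cV[R]_n.

Lemma dotvD b u v : dotv b (u + v) = dotv b u + dotv b v.
Proof. by rewrite /dotv mulmxDr mxE. Qed.

Lemma dotvZ b v (k : R) : dotv b (k *: v) = k * dotv b v.
Proof. by rewrite /dotv -scalemxAr mxE. Qed.

Lemma dotvB b u v : dotv b (u - v) = dotv b u - dotv b v.
Proof. by rewrite dotvD -scaleN1r dotvZ mulN1r. Qed.

Lemma dotvC u v : dotv u v = dotv v u.
Proof. by rewrite /dotv !mxE; apply: eq_bigr => k _; rewrite !mxE mulrC. Qed.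

Lemma dotv0l v : dotv 0 v = 0.
Proof. by rewrite /dotv trmx0 mul0mx mxE. Qed.

End DotProduct.

Lemma imB_of_dotv_eq0 {R : realType} {n m : nat} {B : 'M[R]_(n, m)}
    {beta : 'cV[R]_n} :
  beta != 0 -> beta^T *m B = 0 -> \rank B = n.-1 ->
  forall v, dotv beta v = 0 -> exists w, B *m w = v.
Proof.
move=> beta_n0 betaB rkB v betav.
have BT_ker : (B^T <= kermx beta)%MS.
  by apply/sub_kermxP; rewrite -[B^T *m beta]trmxK trmx_mul trmxK betaB trmx0.
have rk_beta : \rank beta = 1%N.
  by apply/eqP; rewrite eqn_leq rank_leq_col lt0n mxrank_eq0 beta_n0.
have BT_eq_ker : (B^T == kermx beta)%MS.
  by rewrite -(mxrank_leqif_eq BT_ker) mxrank_ker rk_beta mxrank_tr rkB subn1.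
have : (v^T <= B^T)%MS.
  rewrite (eqmxP BT_eq_ker); apply/sub_kermxP; apply/matrixP => i j.
  by rewrite !ord1 [RHS]mxE -betav dotvC /dotv.
by case/submxP => D vD; exists D^T; rewrite -[v]trmxK vD trmx_mul trmxK.
Qed.

Lemma is_derive_scalel {R : realType} (c t : R) :
  is_derive t 1 (fun s : R => c * s) c.
Proof.
by have := is_deriveZ c (is_derive_id t (1 : R)); rewrite /GRing.scale /= mulr1.
Qed.

Section AffineODE.
Variables (R : realType) (c0 c1 : R).
Hypothesis c1_n0 : c1 != 0.

Let sol (t : R) := c0 / c1 * (expR (c1 * t) - 1).

Lemma is_derive_affine_ode_sol (t : R) : is_derive t 1 sol (c0 + c1 * sol t).
Proof.
have dE : is_derive t 1 (expR \o (fun t => c1 * t)) (expR (c1 * t) * c1).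
  exact: is_derive1_comp (is_derive_expR _) (is_derive_scalel c1 t).
have := is_deriveZ (c0 / c1) (is_deriveB dE (is_derive_cst (1 : R) t 1)).
rewrite subr0 => h; apply: (is_derive_eq (near_eq_is_derive _ h)).
  by apply: filterE.
by rewrite /sol /GRing.scale /=; field.
Qed.

Lemma affine_ode_sol_nondecreasing : 0 < c0 -> {homo sol : s t / s <= t}.
Proof.
move=> c0_gt0 s t st; rewrite /sol.
have [c1_lt0|c1_gt0|c1_eq0] := ltgtP c1 0; last by move/eqP: c1_n0.
- have k : c0 / c1 < 0 by rewrite pmulr_rlt0 // invr_lt0.
  by rewrite ler_nM2l // lerD2r ler_expR ler_nM2l.
- have k : 0 < c0 / c1 by rewrite divr_gt0.
  by rewrite ler_pM2l // lerD2r ler_expR ler_pM2l.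
Qed.

End AffineODE.

Lemma affine_ode_reaches_one {R : realType} {c0 c1 : R} :
  0 < c0 -> 0 < c0 + c1 ->
  exists (T : R) (s : R -> R), 0 < T /\ s 0 = 0 /\ s T = 1 /\
    (forall t, 0 <= t <= T -> 0 <= s t <= 1) /\
    (forall t : R, is_derive t 1 s (c0 + c1 * s t)).
Proof.
move=> c0_gt0 c01_gt0; have c0_n0 : c0 != 0 by rewrite gt_eqF.
have [->|c1_n0] := eqVneq c1 0.
  exists c0^-1, (fun t => c0 * t); split; first by rewrite invr_gt0.
  split; first by rewrite mulr0.
  split; first by rewrite mulfV.
  split; last by move=> t; rewrite mul0r addr0; apply: is_derive_scalel.
  move=> t /andP[t_ge0 tT]; rewrite mulr_ge0 ?(ltW c0_gt0) //=.
  by rewrite -(mulfV c0_n0) ler_pM2l.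
pose s t := c0 / c1 * (expR (c1 * t) - 1).
pose T := ln (1 + c1 / c0) / c1.
have ratio_gt0 : 0 < 1 + c1 / c0 by rewrite -(mulfV c0_n0) -mulrDl divr_gt0.
have s0 : s 0 = 0 by rewrite /s mulr0 expR0 subrr mulr0.
have sT : s T = 1.
  rewrite /s /T [c1 * (_ / _)]mulrC divfK // lnK ?posrE // addrAC subrr add0r.
  by rewrite mulrA divfK // divff.
have s_mono := @affine_ode_sol_nondecreasing _ _ _ c1_n0 c0_gt0.
exists T, s; split.
  rewrite /T; have [c1_lt0|c1_gt0|c1_eq0] := ltgtP c1 0; last by move/eqP: c1_n0.
  - rewrite -divrNN divr_gt0 // ?oppr_gt0 //; apply: ln_lt0.
    by rewrite ratio_gt0 /= gtrDl pmulr_llt0 ?invr_gt0.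
  - by rewrite divr_gt0 // ln_gt0 // ltrDl divr_gt0.
do 2 (split => //); split; last exact: is_derive_affine_ode_sol.
by move=> t /andP[t_ge0 tT]; apply/andP; split; [rewrite -s0 | rewrite -sT]; exact: s_mono.
Qed.

Lemma is_derive_affine_curve {R : realType} {k : nat} (p q : 'cV[R]_k)
    {s ds : R -> R} :
  (forall t : R, is_derive t 1 s (ds t)) ->
  forall j (t : R), is_derive t 1 (fun r => (p + s r *: q) j 0) (ds t * q j 0).
Proof.
move=> s_der j t.
have h := is_deriveD (is_derive_cst (p j 0) t 1) (is_deriveZ (q j 0) (s_der t)).
apply: (is_derive_eq (near_eq_is_derive _ h)).
  by apply: filterE => r; rewrite !mxE /GRing.scale /= mulrC.
by rewrite add0r /GRing.scale /= mulrC.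
Qed.

Lemma reach_within_segment {R : realType} {n m : nat} {A : 'M[R]_n}
    {a : 'cV[R]_n} {B : 'M[R]_(n, m)} {z y : 'cV[R]_n} {c0 c1 T : R}
    {s : R -> R} {w0 w1 : 'cV[R]_m} :
  0 < T -> s 0 = 0 -> s T = 1 -> (forall t, 0 <= t <= T -> 0 <= s t <= 1) ->
  (forall t : R, is_derive t 1 s (c0 + c1 * s t)) ->
  B *m w0 = c0 *: (y - z) - (A *m z + a) ->
  B *m w1 = c1 *: (y - z) - A *m (y - z) ->
  reach_within A a B (segment z y) z y.
Proof.
move=> T_gt0 s0 sT s_01 s_der w0E w1E; set d := y - z.
pose u t := w0 + s t *: w1; pose x t := z + s t *: d.
have u_der := is_derive_affine_curve w0 w1 s_der.
have x_der := is_derive_affine_curve z d s_der.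
exists u, T; split; first exact: ltW.
split.
  exists [:: T]; split; first by rewrite /partition_of /= T_gt0.
  case=> [|k] //= _; exists u; split => // j.
  apply: derivable_within_continuous => t _.
  exact: (@ex_derive _ _ _ _ _ _ _ (u_der j t)).
exists x, [::]; split; first by rewrite /x s0 scale0r addr0.
split; first by rewrite /x sT scale1r /d addrC subrK.
split.
  move=> t /s_01 st01; exists (s t); split => //.
  by rewrite /x /d; apply/matrixP => i j; rewrite !mxE; ring.
split.
  move=> j; apply: derivable_within_continuous => t _.
  exact: (@ex_derive _ _ _ _ _ _ _ (x_der j t)).
move=> t _ _ j.
have -> : A *m x t + a + B *m u t = (c0 + c1 * s t) *: d.
  rewrite /x /u !mulmxDr -!scalemxAr w0E w1E.
  move: (A *m d) (A *m z) => Ad Az.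
  by apply/matrixP => i k; rewrite !mxE; ring.
by rewrite mxE.
Qed.

Theorem lemma5 (R : realType) (n m : nat) (P : set 'cV[R]_n)
  (A : 'M[R]_n) (a : 'cV[R]_n) (B : 'M[R]_(n, m)) (beta : 'cV[R]_n)
  (hP : is_polytope P) (hPdim : full_dim P)
  (hrank : \rank B = n.-1) (hctrb : controllable A B)
  (hint : forall x, interior_pt P x -> ~ Oset A a B x)
  (hbeta_unit : dotv beta beta = 1)
  (hbeta_normal : beta^T *m B = 0)
  (hbeta_sign : forall x, P x -> dotv beta (A *m x + a) <= 0)
  (z y : 'cV[R]_n) (hz : P z) (hy : P y) (hzy : y <> z)
  (hzO : ~ Oset A a B z) (hyO : ~ Oset A a B y)
  (hbyz : dotv beta y < dotv beta z) :
  reach_within A a B (segment z y) z y.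
Proof.
have beta_n0 : beta != 0.
  by apply: contra_eq_neq hbeta_unit => ->; rewrite dotv0l eq_sym oner_neq0.
have in_imB := imB_of_dotv_eq0 beta_n0 hbeta_normal hrank.
have drift_lt0 x : P x -> ~ Oset A a B x -> dotv beta (A *m x + a) < 0.
  move=> Px xO; rewrite lt_neqAle hbeta_sign // andbT.
  by apply/eqP => /in_imB [w xw]; apply: xO; exists w; rewrite xw.
set d := y - z; set del := dotv beta d.
set g0 := dotv beta (A *m z + a); set g1 := dotv beta (A *m d).
have del_lt0 : del < 0 by rewrite /del dotvB subr_lt0.
have del_n0 : del != 0 by rewrite lt_eqF.
have g01E : g0 + g1 = dotv beta (A *m y + a).
  rewrite -dotvD /d mulmxBr; congr dotv.
  by move: (A *m y) (A *m z) => Ay Az; apply/matrixP => i j; rewrite !mxE; ring.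
have c0_gt0 : 0 < g0 / del by rewrite ltr_ndivlMr // mul0r drift_lt0.
have c01_gt0 : 0 < g0 / del + g1 / del.
  by rewrite -mulrDl ltr_ndivlMr // mul0r g01E drift_lt0.
have [T [s [T_gt0 [s0 [sT [s_01 s_der]]]]]] := affine_ode_reaches_one c0_gt0 c01_gt0.
have [w0 w0E] : exists w0, B *m w0 = g0 / del *: d - (A *m z + a).
  by apply: in_imB; rewrite dotvB dotvZ divfK // subrr.
have [w1 w1E] : exists w1, B *m w1 = g1 / del *: d - A *m d.
  by apply: in_imB; rewrite dotvB dotvZ divfK // subrr.
exact: reach_within_segment T_gt0 s0 sT s_01 s_der w0E w1E.
Qed.
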